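(* Let $q$ be a power of a prime $p$, let $n \in \mathbb{N}$, and let $S \subseteq \{0,1,\ldots,n\}$, $S \neq \emptyset$. If $q = 2$, further assume $0 \notin S$ and $n \notin S$. Then for all $i \in \mathbb{Z}_{q^n-1}$, $\delta_{n-S}(i) = \delta_S(Q_n - i)$, where $Q_n = (q^n-1)/(q-1)$. Hence $\delta_{n-S}$ is a shift of the reversal of $\delta_S$.
   Context: Define $\Omega(0) = \{0\} \subseteq \mathbb{Z}_{q^n-1}$ and, for $1 \le w \le n$, $\Omega(w)$ is the set of $k \in \mathbb{Z}_{q^n-1}$ whose canonical representative in $\{0,1,\ldots,q^n-2\}$ equals $q^{i_1} + \cdots + q^{i_w}$ for some integers $0 \le i_1 < \cdots < i_w \le n-1$. For $W \subseteq \{0,\ldots,n\}$, $\Omega(W) = \bigcup_{w \in W}\Omega(w)$ and $\delta_W : \mathbb{Z}_{q^n-1} \to \{0,1\} \subseteq \mathbb{F}_p$ is the indicator function of $\Omega(W)$. Also $n - S := \{n - s : s \in S\}$. For $f : \mathbb{Z}_N \to \mathbb{F}_q$, the $k$-shift of $f$ is $i \mapsto f(i+k)$ and the reversal of $f$ is $i \mapsto f(-(1+i))$. *)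

From HB Require Import structures.
From mathcomp Require Import all_boot all_order all_algebra.
Unset Printing Implicit Defensive.
Import Order.TTheory GRing.Theory Num.Theory.
Local Open Scope ring_scope.

(* Elements of Z_{q^n-1} are represented by integers k : int; the canonical
   representative is (k %% (q^n-1))%Z (in {0,...,q^n-2} when q^n-1 > 0;
   when q^n-1 = 0, i.e. n = 0, Z_0 = Z and the representative is k itself). *)
Definition modulus (q n : nat) : int := (q ^ n)%:Z - 1.

Definition canrep (q n : nat) (k : int) : int := (k %% modulus q n)%Z.

(* k \in Omega(w): canonical rep equals q^{i_1}+...+q^{i_w}, 0<=i_1<...<i_w<=n-1.
   For w = 0 this gives the empty sum, i.e. Omega(0) = {0}. *)
Definition in_Omega (q n w : nat) (k : int) : bool :=
  [exists A : {set 'I_n}, (#|A| == w) && (canrep q n k == (\sum_(i in A) q ^ i)%N%:Z)].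

Definition in_OmegaW (q n : nat) (W : {set 'I_n.+1}) (k : int) : bool :=
  [exists w in W, in_Omega q n w k].

Definition delta (p q n : nat) (W : {set 'I_n.+1}) (k : int) : 'F_p :=
  if in_OmegaW q n W k then 1 else 0.

Definition nminus (n : nat) (S : {set 'I_n.+1}) : {set 'I_n.+1} :=
  [set rev_ord s | s in S].

Definition Qn (q n : nat) : int := ((q ^ n - 1) %/ (q - 1))%N%:Z.

Definition shift (T : Type) (f : int -> T) (k : int) : int -> T := fun i => f (i + k).
Definition reversal (T : Type) (f : int -> T) : int -> T := fun i => f (- (1 + i)).
Arguments nminus {n} S.
Arguments shift {T} f k _.
Arguments reversal {T} f _.

From HB Require Import structures.
From mathcomp Require Import all_boot all_order all_algebra.
From mathcomp Require Import zify ring.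
Import Order.TTheory GRing.Theory Num.Theory.
Local Open Scope ring_scope.

(* If the residue of x is the q-ary number with digit set A, then Q_n - x has
   the complementary digit set, because Q_n = 1 + q + ... + q^(n-1) is the
   number with every digit equal to 1.  The complementary number stays below
   q^n - 1 (so it is again the canonical residue) unless q = 2 and A is empty,
   which the hypotheses 0, n \notin S exclude for both S and n - S.  Thus i lies in
   Omega(n - w) iff Q_n - i lies in Omega(w). *)

Lemma canrep_id (q n : nat) (m : int) :
  (0 <= m < modulus q n) || (n == 0%N) -> canrep q n m = m.
Proof.
case/orP => [|/eqP->]; first exact: modz_small.
by rewrite /canrep /modulus expn0 subrr modz0.
Qed.

Lemma canrep_subr (q n : nat) (a x : int) :
  canrep q n (a - canrep q n x) = canrep q n (a - x).
Proof. by rewrite /canrep -modzDmr modzNm modzDmr. Qed.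

Lemma mem_nminus (n : nat) (S : {set 'I_n.+1}) (x : 'I_n.+1) :
  (x \in nminus S) = (rev_ord x \in S).
Proof. by rewrite -{1}(rev_ordK x) mem_imset //; apply: rev_ord_inj. Qed.

Lemma nminusK (n : nat) : involutive (@nminus n).
Proof. by move=> S; apply/setP => x; rewrite !mem_nminus rev_ordK. Qed.

Section QaryComplement.

Variables q n : nat.
Hypothesis q_gt1 : (1 < q)%N.

Let sum_exp (A : {set 'I_n}) : nat := (\sum_(i in A) q ^ i)%N.

Lemma Qn_sum_exp : Qn q n = (\sum_(i < n) q ^ i)%N%:Z.
Proof. by rewrite /Qn subn1 predn_exp subn1 mulKn //; lia. Qed.

Lemma sum_exp_setC_add (A : {set 'I_n}) :
  (sum_exp A + sum_exp (~: A) = \sum_(i < n) q ^ i)%N.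
Proof.
rewrite [RHS](bigID (mem A)) /=.
by congr (_ + _); apply: eq_bigl => i; rewrite ?in_setC.
Qed.

Lemma sum_exp_setC_lt_modulus (A : {set 'I_n}) :
  (0 < n)%N -> (q = 2%N -> A != set0) -> (sum_exp (~: A))%:Z < modulus q n.
Proof.
move=> n_gt0 hA; have split_sum := sum_exp_setC_add A.
have sum_gt0 : (0 < \sum_(i < n) q ^ i)%N.
  by rewrite -(prednK n_gt0) big_ord_recl expn0.
have qn_gt0 : (0 < q ^ n)%N by rewrite expn_gt0 ltnW.
rewrite /modulus -(prednK qn_gt0) -addn1 PoszD addrK ltz_nat predn_exp.
have [q2|q_ne2] := eqVneq q 2%N.
  have [a aA] := set0Pn _ (hA q2).
  have : (0 < sum_exp A)%N.
    by rewrite /sum_exp (bigD1 a) //= ltn_addr // expn_gt0 ltnW.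
  rewrite [in q.-1]q2 mul1n; lia.
have : (2 <= q.-1)%N by lia.
nia.
Qed.

Lemma canrep_Qn_sub (A : {set 'I_n}) (x : int) :
  canrep q n x = (sum_exp A)%:Z -> (q = 2%N -> A != set0) ->
  canrep q n (Qn q n - x) = (sum_exp (~: A))%:Z.
Proof.
move=> hx hA; rewrite -canrep_subr hx Qn_sum_exp -(sum_exp_setC_add A) PoszD addrAC.
rewrite subrr add0r canrep_id //.
have [_|n_gt0] := posnP n; first by rewrite orbT.
by rewrite sum_exp_setC_lt_modulus.
Qed.

Lemma in_Omega_Qn_sub (w : nat) (x : int) :
  (q = 2%N -> w != 0%N) -> in_Omega q n w x -> in_Omega q n (n - w) (Qn q n - x).
Proof.
move=> hw /existsP[A /andP[/eqP cardA /eqP hx]].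
apply/existsP; exists (~: A); apply/andP; split.
  by rewrite -cardA -[X in (X - _)%N](card_ord n) -(cardsC A) addKn.
apply/eqP/canrep_Qn_sub => // /hw.
by apply: contraNneq => A0; rewrite -cardA A0 cards0.
Qed.

Lemma in_OmegaW_nminus_Qn_sub (W : {set 'I_n.+1}) (x : int) :
  (q = 2%N -> ord0 \notin W) ->
  in_OmegaW q n W x -> in_OmegaW q n (nminus W) (Qn q n - x).
Proof.
move=> hW /existsP[w /andP[wW xw]].
apply/existsP; exists (rev_ord w); rewrite mem_nminus rev_ordK wW /=.
rewrite subSS; apply: in_Omega_Qn_sub xw => /hW.
by apply: contraNneq => w0; rewrite (_ : ord0 = w) //; exact: val_inj.
Qed.

Lemma in_OmegaW_nminus (W : {set 'I_n.+1}) (x : int) :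
  (q = 2%N -> ord0 \notin W /\ ord_max \notin W) ->
  in_OmegaW q n (nminus W) x = in_OmegaW q n W (Qn q n - x).
Proof.
move=> hW; apply/idP/idP => hx.
  rewrite -[W](nminusK _ W); apply: in_OmegaW_nminus_Qn_sub hx => /hW[_].
  by rewrite mem_nminus (_ : rev_ord ord0 = ord_max) //; apply: val_inj => /=; lia.
have := in_OmegaW_nminus_Qn_sub _ _ (fun q2 => (hW q2).1) hx.
by rewrite opprB addrC subrK.
Qed.

End QaryComplement.

Theorem lemma4p1 (p k q n : nat) (S : {set 'I_n.+1}) :
  prime p -> (0 < k)%N -> q = (p ^ k)%N ->
  S != set0 ->
  (q = 2%N -> (ord0 \notin S) /\ (ord_max \notin S)) ->
  (forall i : int, delta p q n (nminus S) i = delta p q n S (Qn q n - i)) /\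
  (exists s : int, forall i : int,
      delta p q n (nminus S) i = shift (reversal (delta p q n S)) s i).
Proof.
move=> p_pr k_gt0 -> _ hS.
have q_gt1 : (1 < p ^ k)%N by rewrite -[1%N](expn0 p) ltn_exp2l ?prime_gt1.
have delta_nminus i : delta p (p ^ k) n (nminus S) i = delta p (p ^ k) n S (Qn (p ^ k) n - i).
  by rewrite /delta in_OmegaW_nminus.
split=> //; exists (- 1 - Qn (p ^ k) n) => i.
by rewrite delta_nminus /shift /reversal; congr (delta _ _ _ _ _); ring.
Qed.
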